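(* Let $M$ be a term of $\ell\Lambda_\infty^{4S}$ and $n\in\mathbb{N}$. If $M\to_n N$ (a reduction step at depth $n$), then $\mathcal{W}_n(M)>\mathcal{W}_n(N)$, and $\mathcal{W}_m(M)=\mathcal{W}_m(N)$ for every $m<n$.
   Context: Preterms: possibly infinite trees generated by $M ::= x \mid MN \mid \lambda x.M \mid \lambda^{\downarrow}x.M \mid \lambda^{\uparrow}x.M \mid \downarrow M \mid \uparrow M$ ($\downarrow M$ inductive box, $\uparrow M$ coinductive box). Patterns: $x,\downarrow x,\uparrow x,\#x,\dagger x$; environments: finite sets of patterns, each variable in at most one; $\Theta,\Xi,\Psi,\Phi$ linear environments (sets of variables) with marked versions $\#\Theta$ etc.; $\Upsilon,\Pi$ environments with only patterns $y$, $\downarrow y$; commas are disjoint unions. A term of $\ell\Lambda_\infty^{4S}$ is a preterm $M$ with $\Gamma\vdash M$ derivable for some $\Gamma$ by: (vl) $\#\Theta,\uparrow\Xi,\dagger\Psi,x\vdash x$; (vd) $\#\Theta,\uparrow\Xi,\dagger\Psi,\#x\vdash x$; (va) $\#\Theta,\uparrow\Xi,\dagger\Psi,\dagger x\vdash x$; (a) from $\Upsilon,\#\Theta,\uparrow\Xi,\dagger\Psi\vdash M$ and $\Pi,\#\Theta,\uparrow\Xi,\dagger\Psi\vdash N$ infer $\Upsilon,\Pi,\#\Theta,\uparrow\Xi,\dagger\Psi\vdash MN$; (ll) $\Gamma,x\vdash M$ gives $\Gamma\vdash\lambda x.M$; (li)$_1$ $\Gamma,\#x\vdash M$ gives $\Gamma\vdash\lambda^\downarrow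 x.M$; (li)$_2$ $\Gamma,\downarrow x\vdash M$ gives $\Gamma\vdash\lambda^\downarrow x.M$; (lc) $\Gamma,\uparrow x\vdash M$ gives $\Gamma\vdash\lambda^\uparrow x.M$; (mi) from $\Xi,\uparrow\Psi,\dagger\Phi\vdash M$ infer $\#\Theta,\downarrow\Xi,\uparrow\Psi,\dagger\Phi\vdash\downarrow M$; (mc) from $\dagger\Xi,\dagger\Psi\vdash M$ infer $\#\Theta,\uparrow\Xi,\dagger\Psi\vdash\uparrow M$; (mc) coinductive, others inductive (every infinite branch of a derivation contains infinitely many (mc)). Basic reduction: $(\lambda x.M)N\mapsto M[N/x]$, $(\lambda^\downarrow x.M)(\downarrow N)\mapsto M[N/x]$, $(\lambda^\uparrow x.M)(\uparrow N)\mapsto M[N/x]$; $M\to_n N$ iff $M=C[L]$, $N=C[P]$, $L\mapsto P$, where $C$ is a one-hole context whose hole lies inside exactly $n$ coinductive boxes $\uparrow(\cdot)$ (and any number of inductive boxes). $\mathrm{nfo}(x,M)$ = number of free occurrences of $x$ in $M$. For a term $M$ and $k,m\in\mathbb N$, the weight $W^k_m(M)$ is the unique natural number with: $W^k_0(x)=1$, $W^k_0(\downarrow M)=k\cdot W^k_0(M)$, $W^k_0(\uparrow M)=0$, $W^k_0(MN)=W^k_0(M)+W^k_0(N)$, $W^k_0(\lambda x.M)=W^k_0(\lambda^\downarrow x.M)=W^k_0(\lambda^\uparrow x.M)=W^k_0(M)+1$; $W^k_{m+1}(x)=0$, $W^k_{m+1}(\downarrow M)=W^k_{m+1}(M)$,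 $W^k_{m+1}(\uparrow M)=W^k_m(M)$, $W^k_{m+1}(MN)=W^k_{m+1}(M)+W^k_{m+1}(N)$, $W^k_{m+1}$ of any abstraction of $M$ equals $W^k_{m+1}(M)$. The duplicability factor $D_m(M)$ is the unique natural number with: $D_0(x)=1$, $D_0(\downarrow M)=D_0(M)$, $D_0(\uparrow M)=1$, $D_0(MN)=\max\{D_0(M),D_0(N)\}$, $D_0(\lambda x.M)=D_0(\lambda^\uparrow x.M)=D_0(M)$, $D_0(\lambda^\downarrow x.M)=\max\{\mathrm{nfo}(x,M),D_0(M)\}$; $D_{m+1}(x)=1$, $D_{m+1}(\downarrow M)=D_{m+1}(M)$, $D_{m+1}(\uparrow M)=D_m(M)$, $D_{m+1}(MN)=\max\{D_{m+1}(M),D_{m+1}(N)\}$, $D_{m+1}$ of any abstraction of $M$ equals $D_{m+1}(M)$. Finally $\mathcal{W}_n(M)=W^{D_n(M)}_n(M)$. *)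

(* Infinitary linear lambda calculus l-Lambda_infty^{4S},
   presented with de Bruijn indices (index 0 = innermost binder). *)
From Stdlib Require Import Arith List.
Import ListNotations.

CoInductive term : Type :=
| Var  : nat -> term
| App  : term -> term -> term
| Lam  : term -> term
| LamI : term -> term
| LamC : term -> term
| BoxI : term -> term      (* inductive box  (down M) *)
| BoxC : term -> term.     (* coinductive box (up M)  *)

CoInductive bisim : term -> term -> Prop :=
| bs_var  : forall x, bisim (Var x) (Var x)
| bs_app  : forall a b a' b', bisim a a' -> bisim b b' -> bisim (App a b) (App a' b')
| bs_lam  : forall a a', bisim a a' -> bisim (Lam a) (Lam a')
| bs_lamI : forall a a', bisim a a' -> bisim (LamI a) (LamI a')
| bs_lamC : forall a a', bisim a a' -> bisim (LamC a) (LamC a')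
| bs_boxI : forall a a', bisim a a' -> bisim (BoxI a) (BoxI a')
| bs_boxC : forall a a', bisim a a' -> bisim (BoxC a) (BoxC a').

Definition uprn (r : nat -> nat) : nat -> nat :=
  fun i => match i with 0 => 0 | S j => S (r j) end.

CoFixpoint ren (r : nat -> nat) (M : term) : term :=
  match M with
  | Var x => Var (r x)
  | App a b => App (ren r a) (ren r b)
  | Lam a => Lam (ren (uprn r) a)
  | LamI a => LamI (ren (uprn r) a)
  | LamC a => LamC (ren (uprn r) a)
  | BoxI a => BoxI (ren r a)
  | BoxC a => BoxC (ren r a)
  end.

Definition up (s : nat -> term) : nat -> term :=
  fun i => match i with 0 => Var 0 | S j => ren S (s j) end.

CoFixpoint subst (s : nat -> term) (M : term) : term :=
  match M with
  | Var x => s x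
  | App a b => App (subst s a) (subst s b)
  | Lam a => Lam (subst (up s) a)
  | LamI a => LamI (subst (up s) a)
  | LamC a => LamC (subst (up s) a)
  | BoxI a => BoxI (subst s a)
  | BoxC a => BoxC (subst s a)
  end.

(* M[N/x] where x is the variable bound by the enclosing abstraction *)
Definition subst0 (N M : term) : term :=
  subst (fun i => match i with 0 => N | S j => Var j end) M.

(* kinds of patterns: x, down x, up x, #x, dagger x *)
Inductive kind : Type := KLin | KDown | KUp | KHash | KDag.

(* An environment maps each variable (de Bruijn index) to at most one
   pattern; finiteness is imposed where environments are introduced. *)
Definition env := nat -> option kind.

Definition env_finite (G : env) : Prop :=
  exists b, forall i, b <= i -> G i = None.

Definition ext (k : kind) (G : env) : env :=
  fun i => match i with 0 => Some k | S j => G j end.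

(* entry belongs to  #Theta, up Xi, dagger Psi  (or is absent) *)
Definition shared_or_none (o : option kind) : Prop :=
  match o with
  | None | Some KHash | Some KUp | Some KDag => True
  | _ => False
  end.

(* G = #Theta, up Xi, dagger Psi, (pattern k on x) *)
Definition var_env (k : kind) (G : env) (x : nat) : Prop :=
  G x = Some k /\ forall y, y <> x -> shared_or_none (G y).

(* G = Upsilon, Pi, #Theta, up Xi, dagger Psi  with
   G1 = Upsilon, #Theta, up Xi, dagger Psi  and  G2 = Pi, #Theta, up Xi, dagger Psi *)
Definition app_split (G G1 G2 : env) : Prop :=
  forall i,
    match G i with
    | Some KLin | Some KDown =>
        (G1 i = G i /\ G2 i = None) \/ (G1 i = None /\ G2 i = G i)
    | _ => G1 i = G i /\ G2 i = G i
    end.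

(* rule (mi):  Xi, up Psi, dagger Phi |- M   ==>   #Theta, down Xi, up Psi, dagger Phi |- down M *)
Definition mi_env (G G' : env) : Prop :=
  forall i,
    match G i with
    | None => G' i = None
    | Some KHash => G' i = None
    | Some KDown => G' i = Some KLin
    | Some KUp => G' i = Some KUp
    | Some KDag => G' i = Some KDag
    | Some KLin => False
    end.

(* rule (mc):  dagger Xi, dagger Psi |- M   ==>   #Theta, up Xi, dagger Psi |- up M *)
Definition mc_env (G G' : env) : Prop :=
  forall i,
    match G i with
    | None => G' i = None
    | Some KHash => G' i = None
    | Some KUp => G' i = Some KDag
    | Some KDag => G' i = Some KDag
    | Some KLin | Some KDown => False
    end.

(* One layer of the derivation system: all rules are inductive except (mc),
   whose premise is taken from the (coinductive) relation R. *)
Inductive derI (R : env -> term -> Prop) : env -> term -> Prop :=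
| d_vl : forall G x, var_env KLin G x -> derI R G (Var x)
| d_vd : forall G x, var_env KHash G x -> derI R G (Var x)
| d_va : forall G x, var_env KDag G x -> derI R G (Var x)
| d_a  : forall G G1 G2 M N, app_split G G1 G2 ->
           derI R G1 M -> derI R G2 N -> derI R G (App M N)
| d_ll : forall G M, derI R (ext KLin G) M -> derI R G (Lam M)
| d_li1 : forall G M, derI R (ext KHash G) M -> derI R G (LamI M)
| d_li2 : forall G M, derI R (ext KDown G) M -> derI R G (LamI M)
| d_lc : forall G M, derI R (ext KUp G) M -> derI R G (LamC M)
| d_mi : forall G G' M, mi_env G G' -> derI R G' M -> derI R G (BoxI M)
| d_mc : forall G G' M, mc_env G G' -> R G' M -> derI R G (BoxC M).

(* Derivability: greatest fixed point of (least fixed point of derI), i.e.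
   possibly infinite derivations in which every infinite branch crosses
   infinitely many (mc) rules. *)
Definition der (G : env) (M : term) : Prop :=
  exists R : env -> term -> Prop,
    R G M /\ forall G' M', R G' M' -> derI R G' M'.

Definition is_term (M : term) : Prop :=
  exists G, env_finite G /\ der G M.

Inductive step0 : nat -> term -> term -> Prop :=
| st_beta  : forall M N, step0 0 (App (Lam M) N) (subst0 N M)
| st_betaI : forall M N, step0 0 (App (LamI M) (BoxI N)) (subst0 N M)
| st_betaC : forall M N, step0 0 (App (LamC M) (BoxC N)) (subst0 N M)
| st_appl : forall n M M' N, step0 n M M' -> step0 n (App M N) (App M' N)
| st_appr : forall n M N N', step0 n N N' -> step0 n (App M N) (App M N')
| st_lam  : forall n M M', step0 n M M' -> step0 n (Lam M) (Lam M')
| st_lamI : forall n M M', step0 n M M' -> step0 n (LamI M) (LamI M')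
| st_lamC : forall n M M', step0 n M M' -> step0 n (LamC M) (LamC M')
| st_boxI : forall n M M', step0 n M M' -> step0 n (BoxI M) (BoxI M')
| st_boxC : forall n M M', step0 n M M' -> step0 (S n) (BoxC M) (BoxC M').

Definition step (n : nat) (M N : term) : Prop :=
  exists N', step0 n M N' /\ bisim N' N.

Inductive dir : Type := dAppL | dAppR | dAbs | dBoxI | dBoxC.

Inductive Occ : nat -> term -> list dir -> Prop :=
| occ_var  : forall x, Occ x (Var x) []
| occ_appl : forall x M N p, Occ x M p -> Occ x (App M N) (dAppL :: p)
| occ_appr : forall x M N p, Occ x N p -> Occ x (App M N) (dAppR :: p)
| occ_lam  : forall x M p, Occ (S x) M p -> Occ x (Lam M) (dAbs :: p)
| occ_lamI : forall x M p, Occ (S x) M p -> Occ x (LamI M) (dAbs :: p)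
| occ_lamC : forall x M p, Occ (S x) M p -> Occ x (LamC M) (dAbs :: p)
| occ_boxI : forall x M p, Occ x M p -> Occ x (BoxI M) (dBoxI :: p)
| occ_boxC : forall x M p, Occ x M p -> Occ x (BoxC M) (dBoxC :: p).

Definition nfo (x : nat) (M : term) (c : nat) : Prop :=
  exists l : list (list dir),
    NoDup l /\ (forall p, In p l <-> Occ x M p) /\ length l = c.

Inductive Wt (k : nat) : nat -> term -> nat -> Prop :=
| w0_var  : forall x, Wt k 0 (Var x) 1
| w0_boxI : forall M w, Wt k 0 M w -> Wt k 0 (BoxI M) (k * w)
| w0_boxC : forall M, Wt k 0 (BoxC M) 0
| w0_app  : forall M N a b, Wt k 0 M a -> Wt k 0 N b -> Wt k 0 (App M N) (a + b)
| w0_lam  : forall M w, Wt k 0 M w -> Wt k 0 (Lam M) (w + 1)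
| w0_lamI : forall M w, Wt k 0 M w -> Wt k 0 (LamI M) (w + 1)
| w0_lamC : forall M w, Wt k 0 M w -> Wt k 0 (LamC M) (w + 1)
| wS_var  : forall m x, Wt k (S m) (Var x) 0
| wS_boxI : forall m M w, Wt k (S m) M w -> Wt k (S m) (BoxI M) w
| wS_boxC : forall m M w, Wt k m M w -> Wt k (S m) (BoxC M) w
| wS_app  : forall m M N a b, Wt k (S m) M a -> Wt k (S m) N b ->
              Wt k (S m) (App M N) (a + b)
| wS_lam  : forall m M w, Wt k (S m) M w -> Wt k (S m) (Lam M) w
| wS_lamI : forall m M w, Wt k (S m) M w -> Wt k (S m) (LamI M) w
| wS_lamC : forall m M w, Wt k (S m) M w -> Wt k (S m) (LamC M) w.

Inductive Dup : nat -> term -> nat -> Prop :=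
| d0_var  : forall x, Dup 0 (Var x) 1
| d0_boxI : forall M d, Dup 0 M d -> Dup 0 (BoxI M) d
| d0_boxC : forall M, Dup 0 (BoxC M) 1
| d0_app  : forall M N a b, Dup 0 M a -> Dup 0 N b -> Dup 0 (App M N) (Nat.max a b)
| d0_lam  : forall M d, Dup 0 M d -> Dup 0 (Lam M) d
| d0_lamC : forall M d, Dup 0 M d -> Dup 0 (LamC M) d
| d0_lamI : forall M d c, Dup 0 M d -> nfo 0 M c -> Dup 0 (LamI M) (Nat.max c d)
| dS_var  : forall m x, Dup (S m) (Var x) 1
| dS_boxI : forall m M d, Dup (S m) M d -> Dup (S m) (BoxI M) d
| dS_boxC : forall m M d, Dup m M d -> Dup (S m) (BoxC M) d
| dS_app  : forall m M N a b, Dup (S m) M a -> Dup (S m) N b ->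
              Dup (S m) (App M N) (Nat.max a b)
| dS_lam  : forall m M d, Dup (S m) M d -> Dup (S m) (Lam M) d
| dS_lamI : forall m M d, Dup (S m) M d -> Dup (S m) (LamI M) d
| dS_lamC : forall m M d, Dup (S m) M d -> Dup (S m) (LamC M) d.

(* calW n M v  :  \mathcal{W}_n(M) = W^{D_n(M)}_n(M) = v *)
Definition calW (n : nat) (M : term) (v : nat) : Prop :=
  exists d, Dup n M d /\ Wt d n M v.

(* A step at depth n only changes the part of the term lying inside n coinductive
   boxes, which is invisible to W_m and D_m for m < n; so these do not change.

   At depth n the redex is seen by W^k_n as by W^k_0, i.e. under finitely many
   inductive boxes only. Firing it removes an abstraction (weight 1) and, for a
   box-redex, the box around the argument N, of weight k * W(N) if inductive and 0 if
   coinductive; in exchange the bound variable is replaced by copies of N. Typing bounds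
   the weighted number of these copies: a linear variable occurs at most once, a
   [down x] at most once per inductive box, hence with total weight <= k, a [#x] at most
   nfo(x) <= D_0 <= k times, and an [up x] only inside coinductive boxes. Hence W^k_n
   strictly decreases for every k >= D_n(M). Moreover D_n does not increase, because the
   number of occurrences of a [#]-bound variable can only grow by the copying of a
   linear [down y], and then stays below D_0. As W^k_n is monotone in k,
   W_n(N) <= W^{D_n M}_n(N) < W^{D_n M}_n(M) = W_n(M).

   All these quantities exist because the derivation of a term is well founded up to
   coinductive boxes, and the weight at depth m only looks m boxes deep. *)

From Stdlib Require Import Arith Lia List.
Import ListNotations.

(** * Unfolding the corecursive operations *)

(* Matching on a cofixpoint forces one unfolding, so the equations below hold by
   [reflexivity] after rewriting with [term_case_eq]. *)
Definition term_case (t : term) : term :=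
  match t with
  | Var x => Var x | App a b => App a b | Lam a => Lam a | LamI a => LamI a
  | LamC a => LamC a | BoxI a => BoxI a | BoxC a => BoxC a
  end.

Lemma term_case_eq (t : term) : t = term_case t.
Proof. now destruct t. Qed.

Ltac unfold_cofix :=
  lazymatch goal with |- ?l = _ => rewrite (term_case_eq l); reflexivity end.

Lemma ren_Var r x : ren r (Var x) = Var (r x). Proof. unfold_cofix. Qed.
Lemma ren_App r a b : ren r (App a b) = App (ren r a) (ren r b). Proof. unfold_cofix. Qed.
Lemma ren_Lam r a : ren r (Lam a) = Lam (ren (uprn r) a). Proof. unfold_cofix. Qed.
Lemma ren_LamI r a : ren r (LamI a) = LamI (ren (uprn r) a). Proof. unfold_cofix. Qed.
Lemma ren_LamC r a : ren r (LamC a) = LamC (ren (uprn r) a). Proof. unfold_cofix. Qed.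
Lemma ren_BoxI r a : ren r (BoxI a) = BoxI (ren r a). Proof. unfold_cofix. Qed.
Lemma ren_BoxC r a : ren r (BoxC a) = BoxC (ren r a). Proof. unfold_cofix. Qed.

Lemma subst_Var s x : subst s (Var x) = s x.
Proof. rewrite (term_case_eq (subst s (Var x))); simpl. symmetry; apply term_case_eq. Qed.
Lemma subst_App s a b : subst s (App a b) = App (subst s a) (subst s b). Proof. unfold_cofix. Qed.
Lemma subst_Lam s a : subst s (Lam a) = Lam (subst (up s) a). Proof. unfold_cofix. Qed.
Lemma subst_LamI s a : subst s (LamI a) = LamI (subst (up s) a). Proof. unfold_cofix. Qed.
Lemma subst_LamC s a : subst s (LamC a) = LamC (subst (up s) a). Proof. unfold_cofix. Qed.
Lemma subst_BoxI s a : subst s (BoxI a) = BoxI (subst s a). Proof. unfold_cofix. Qed.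
Lemma subst_BoxC s a : subst s (BoxC a) = BoxC (subst s a). Proof. unfold_cofix. Qed.

#[export] Hint Rewrite ren_Var ren_App ren_Lam ren_LamI ren_LamC ren_BoxI ren_BoxC
  subst_Var subst_App subst_Lam subst_LamI subst_LamC subst_BoxI subst_BoxC : term_eqs.

(** * Free occurrences *)

Lemma Occ_ren x M p : Occ x M p -> forall r, Occ (r x) (ren r M) p.
Proof.
  induction 1; intro r; autorewrite with term_eqs; constructor; auto.
  all: exact (IHOcc (uprn r)).
Qed.

Lemma Occ_ren_inv y T p : Occ y T p ->
  forall r M, T = ren r M -> exists x, r x = y /\ Occ x M p.
Proof.
  induction 1; intros r M0 E; destruct M0; autorewrite with term_eqs in E;
    try discriminate E; injection E; intros; subst; try (eauto using Occ; fail).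
  all: try (edestruct IHOcc as [z [<- O]]; [reflexivity|eauto using Occ]; fail).
  all: edestruct IHOcc as [[|z] [Hz O]]; [reflexivity|discriminate|].
  all: injection Hz; intros <-; eauto using Occ.
Qed.

Lemma Occ_ren_S_inv x t p : Occ x (ren S t) p -> exists y, x = S y /\ Occ y t p.
Proof. intro O; destruct (Occ_ren_inv _ _ _ O S t eq_refl) as [y [<- ?]]; eauto. Qed.

Lemma Occ_subst z M q : Occ z M q ->
  forall s y t, Occ y (s z) t -> Occ y (subst s M) (q ++ t).
Proof.
  induction 1; intros s y t O; autorewrite with term_eqs; simpl; auto; constructor; auto.
  all: apply IHOcc; exact (Occ_ren _ _ _ O S).
Qed.

Lemma Occ_subst_inv y T p : Occ y T p -> forall s M, T = subst s M ->
  exists z q t, Occ z M q /\ Occ y (s z) t /\ p = q ++ t.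
Proof.
  induction 1; intros s M0 E; destruct M0 as [z| | | | | |];
    autorewrite with term_eqs in E;
    try (eexists z, [], _; rewrite <- E; split; [constructor|split; [eauto using Occ|reflexivity]]; fail);
    try discriminate E; injection E; intros; subst.
  all: try (edestruct IHOcc as (z & q & t & Oq & Ot & ->); [reflexivity|];
            eexists z, (_ :: q), t; eauto using Occ; fail).
  all: edestruct IHOcc as ([|z] & q & t & Oq & Ot & ->); [reflexivity| inversion Ot |].
  all: destruct (Occ_ren_S_inv _ _ _ Ot) as [y [Ey Ot']]; injection Ey; intros <-.
  all: exists z, (dAbs :: q), t; eauto using Occ.
Qed.

Lemma Occ_prefix_free z M q : Occ z M q ->
  forall z' q' r r', Occ z' M q' -> q ++ r = q' ++ r' -> q = q'.
Proof.
  induction 1; intros z' q' r r' O E; inversion O; subst; simpl in *;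
    try discriminate; auto; injection E; intros E'; f_equal; eauto.
Qed.

Lemma Occ_var_unique z M q : Occ z M q -> forall z', Occ z' M q -> z = z'.
Proof.
  induction 1; intros z' O; inversion O; subst; auto.
  all: assert (S x = S z') by eauto; congruence.
Qed.

Lemma NoDup_map_injective {A B} (f : A -> B) l :
  (forall a b, f a = f b -> a = b) -> NoDup l -> NoDup (map f l).
Proof. intros Hf; apply NoDup_map_NoDup_ForallPairs; intros a b _ _; apply Hf. Qed.

Definition OccList x M l := NoDup l /\ forall p, In p l <-> Occ x M p.

Lemma OccList_length x M l1 l2 :
  OccList x M l1 -> OccList x M l2 -> length l1 = length l2.
Proof.
  intros [N1 H1] [N2 H2].
  apply Nat.le_antisymm; apply NoDup_incl_length; auto; intros p Hp.
  - now apply H2, H1.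
  - now apply H1, H2.
Qed.

Lemma nfo_OccList x M c : nfo x M c <-> exists l, OccList x M l /\ length l = c.
Proof. unfold nfo, OccList; firstorder. Qed.

Lemma nfo_unique x M c1 c2 : nfo x M c1 -> nfo x M c2 -> c1 = c2.
Proof.
  rewrite !nfo_OccList; intros [l1 [O1 <-]] [l2 [O2 <-]]; exact (OccList_length _ _ _ _ O1 O2).
Qed.

Lemma nfo_ext x M y N c :
  (forall p, Occ x M p <-> Occ y N p) -> nfo x M c -> nfo y N c.
Proof.
  intros E (l & ND & Hl & Lc); exists l; split; [exact ND|split; [|exact Lc]].
  intro q; rewrite Hl; apply E.
Qed.

Lemma OccList_nil x M : (forall p, ~ Occ x M p) -> OccList x M [].
Proof. intro H; split; [constructor|]; intro p; split; [intros []|intro O; exact (H p O)]. Qed.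

Lemma OccList_Var x y : OccList x (Var y) (if Nat.eqb x y then [[]] else []).
Proof.
  destruct (Nat.eqb_spec x y) as [<-|Hxy].
  - split; [repeat constructor; intros []|].
    intro q; split; [intros [<-|[]]; constructor|intro O; inversion O; now left].
  - apply OccList_nil; intros p O; inversion O; congruence.
Qed.

Lemma OccList_map_cons d x A y T l :
  (forall p, Occ y T p <-> exists q, p = d :: q /\ Occ x A q) ->
  OccList x A l -> OccList y T (map (cons d) l).
Proof.
  intros E [ND Hl]; split.
  - apply NoDup_map_injective; [congruence|exact ND].
  - intro p; rewrite in_map_iff, E; split.
    + intros [q [<- Hq]]; exists q; split; [reflexivity|now apply Hl].
    + intros [q [-> Hq]]; exists q; split; [reflexivity|now apply Hl].
Qed.

Ltac occ_shape := intro; split; [intro O; inversion O; eauto|intros (? & -> & ?); constructor; auto].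

Lemma OccList_Lam x A l : OccList (S x) A l -> OccList x (Lam A) (map (cons dAbs) l).
Proof. apply OccList_map_cons; occ_shape. Qed.
Lemma OccList_LamI x A l : OccList (S x) A l -> OccList x (LamI A) (map (cons dAbs) l).
Proof. apply OccList_map_cons; occ_shape. Qed.
Lemma OccList_LamC x A l : OccList (S x) A l -> OccList x (LamC A) (map (cons dAbs) l).
Proof. apply OccList_map_cons; occ_shape. Qed.
Lemma OccList_BoxI x A l : OccList x A l -> OccList x (BoxI A) (map (cons dBoxI) l).
Proof. apply OccList_map_cons; occ_shape. Qed.

Lemma OccList_App x A B l1 l2 : OccList x A l1 -> OccList x B l2 ->
  OccList x (App A B) (map (cons dAppL) l1 ++ map (cons dAppR) l2).
Proof.
  intros [N1 H1] [N2 H2]; split.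
  - apply NoDup_app; try (apply NoDup_map_injective; [congruence|assumption]).
    intros p Hp1 Hp2; apply in_map_iff in Hp1 as [? [<- _]]; apply in_map_iff in Hp2 as [? [E _]].
    discriminate.
  - intro p; rewrite in_app_iff, !in_map_iff; split.
    + intros [[q [<- Hq]]|[q [<- Hq]]]; constructor; [apply H1|apply H2]; exact Hq.
    + intro O; inversion O; subst; [left|right]; eexists; split; eauto; [apply H1|apply H2]; auto.
Qed.

Lemma bisim_sym a b : bisim a b -> bisim b a.
Proof. revert a b; cofix CH; intros a b H; destruct H; constructor; apply CH; assumption. Qed.

Lemma Occ_bisim x A p : Occ x A p -> forall B, bisim A B -> Occ x B p.
Proof. induction 1; intros B HB; inversion HB; subst; constructor; auto. Qed.

Lemma Wt_bisim k m A w : Wt k m A w -> forall B, bisim A B -> Wt k m B w.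
Proof. induction 1; intros B HB; inversion HB; subst; constructor; auto. Qed.

Lemma Dup_bisim m A d : Dup m A d -> forall B, bisim A B -> Dup m B d.
Proof.
  induction 1; intros B HB; inversion HB; subst; constructor; auto.
  eapply nfo_ext; [|eassumption].
  intro p; split; intro; eapply Occ_bisim; eauto using bisim_sym.
Qed.

Lemma Wt_ren k m M w : Wt k m M w -> forall r, Wt k m (ren r M) w.
Proof. induction 1; intro r; autorewrite with term_eqs; constructor; auto. Qed.

Lemma Occ0_ren_uprn r B p : Occ 0 (ren (uprn r) B) p <-> Occ 0 B p.
Proof.
  split; intro O.
  - destruct (Occ_ren_inv _ _ _ O _ _ eq_refl) as [[|z] [Hz ?]]; [assumption|discriminate].
  - exact (Occ_ren _ _ _ O (uprn r)).
Qed.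

Lemma Dup_ren m M d : Dup m M d -> forall r, Dup m (ren r M) d.
Proof.
  induction 1; intro r; autorewrite with term_eqs; constructor; auto.
  eapply nfo_ext; [|eassumption]. intro p; now rewrite Occ0_ren_uprn.
Qed.

Lemma Wt_unique k m M w1 : Wt k m M w1 -> forall w2, Wt k m M w2 -> w1 = w2.
Proof. induction 1; intros w2 H2; inversion H2; subst; auto. Qed.

Lemma Dup_unique m M d1 : Dup m M d1 -> forall d2, Dup m M d2 -> d1 = d2.
Proof.
  induction 1; intros d2 H2; inversion H2; subst; auto.
  f_equal; eauto using nfo_unique.
Qed.

Lemma Dup_pos m M d : Dup m M d -> 1 <= d.
Proof. induction 1; lia. Qed.

Lemma Wt_mono k m M w : Wt k m M w ->
  forall k', k <= k' -> exists w', Wt k' m M w' /\ w <= w'.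
Proof.
  induction 1; intros k' Hk.
  all: repeat match goal with IH : forall k', ?k0 <= k' -> _ |- _ =>
      destruct (IH k' Hk) as [? [? ?]]; clear IH end.
  all: eexists; split; [constructor; eassumption|]; nia.
Qed.

Lemma Wt_change_k k m M w : Wt k m M w -> forall k', exists w', Wt k' m M w'.
Proof.
  induction 1; intros k'.
  all: repeat match goal with IH : forall k', exists _, _ |- _ =>
      destruct (IH k') as [? ?]; clear IH end.
  all: eexists; constructor; eassumption.
Qed.

(** * Typing bounds the occurrences of a variable *)

Definition deriv_closed (R : env -> term -> Prop) := forall G M, R G M -> derI R G M.

Lemma absent_not_Occ R G M x p :
  deriv_closed R -> derI R G M -> G x = None -> ~ Occ x M p.
Proof.
  intros HR D HG O; revert G D HG; induction O; intros G D HG; inversion D; subst.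
  all: try match goal with H : var_env _ _ _ |- _ => destruct H; congruence end.
  all: try match goal with H : app_split _ _ _ |- _ =>
         specialize (H x); rewrite HG in H; destruct H end.
  all: try match goal with H : mi_env _ _ |- _ => specialize (H x); rewrite HG in H end.
  all: try match goal with H : mc_env _ _ |- _ => specialize (H x); rewrite HG in H end.
  all: eauto.
Qed.

(* The entries [x], [down x], [#x] and absence: a variable with such an entry never
   occurs inside a coinductive box, hence has finitely many occurrences. *)
Definition finitary (o : option kind) : Prop :=
  match o with None | Some KLin | Some KDown | Some KHash => True | _ => False end.

Definition linear_entry (o : option kind) : Prop :=
  match o with Some KLin | Some KDown => True | _ => False end.

Definition occ_bound (o : option kind) (c : nat) : Prop :=
  match o with None => c = 0 | Some KLin | Some KDown => c <= 1 | _ => True end.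

Ltac env_cases H G x :=
  specialize (H x); destruct (G x) as [[]|]; simpl in *;
  repeat match goal with
         | K : _ /\ _ |- _ => destruct K
         | K : _ \/ _ |- _ => destruct K
         | K : _ x = _ |- _ => rewrite K in *
         end; simpl in *; auto; try tauto; try lia.

Lemma app_split_finitary G G1 G2 x :
  app_split G G1 G2 -> finitary (G x) -> finitary (G1 x) /\ finitary (G2 x).
Proof. intro H; env_cases H G x. Qed.

Lemma app_split_linear_l G G1 G2 x :
  app_split G G1 G2 -> linear_entry (G1 x) -> linear_entry (G x) /\ G2 x = None.
Proof. intro H; env_cases H G x. Qed.

Lemma app_split_linear_r G G1 G2 x :
  app_split G G1 G2 -> linear_entry (G2 x) -> linear_entry (G x) /\ G1 x = None.
Proof. intro H; env_cases H G x. Qed.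

Lemma app_split_occ_bound G G1 G2 x a b : app_split G G1 G2 ->
  occ_bound (G1 x) a -> occ_bound (G2 x) b -> occ_bound (G x) (a + b).
Proof. intro H; env_cases H G x. Qed.

Lemma mi_env_finitary G G' x : mi_env G G' -> finitary (G x) -> finitary (G' x).
Proof. intro H; env_cases H G x. Qed.

Lemma mi_env_linear G G' x : mi_env G G' -> finitary (G x) -> linear_entry (G' x) -> linear_entry (G x).
Proof. intro H; env_cases H G x. Qed.

Lemma mi_env_occ_bound G G' x a : mi_env G G' -> occ_bound (G' x) a -> occ_bound (G x) a.
Proof. intro H; env_cases H G x. Qed.

Lemma mc_env_finitary G G' x : mc_env G G' -> finitary (G x) -> G' x = None.
Proof. intro H; env_cases H G x. Qed.

Lemma occ_bound_0 o : occ_bound o 0.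
Proof. destruct o as [[]|]; simpl; auto. Qed.

Lemma finitary_OccList R G M x : deriv_closed R -> derI R G M -> finitary (G x) ->
  exists l, OccList x M l /\ occ_bound (G x) (length l).
Proof.
  intros HR D; revert x; induction D; intros y Hy.
  1-3: exists (if Nat.eqb y x then [[]] else []); split; [apply OccList_Var|];
       destruct H as [Hx _]; destruct (Nat.eqb_spec y x) as [->|];
       [rewrite Hx; simpl; trivial|apply occ_bound_0].
  all: try (destruct (IHD (S y) Hy) as [l [O B]];
            eexists; split; [eauto using OccList_Lam, OccList_LamI, OccList_LamC|];
            rewrite length_map; exact B; fail).
  - destruct (app_split_finitary _ _ _ y H Hy) as [K1 K2].
    destruct (IHD1 y K1) as [l1 [O1 B1]], (IHD2 y K2) as [l2 [O2 B2]].
    eexists; split; [exact (OccList_App _ _ _ _ _ O1 O2)|].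
    rewrite length_app, !length_map; exact (app_split_occ_bound _ _ _ _ _ _ H B1 B2).
  - destruct (IHD y (mi_env_finitary _ _ _ H Hy)) as [l [O B]].
    exists (map (cons dBoxI) l); split; [exact (OccList_BoxI _ _ _ O)|].
    rewrite length_map; exact (mi_env_occ_bound _ _ _ _ H B).
  - exists []; split; [|apply occ_bound_0].
    apply OccList_nil; intros p O; inversion O; subst.
    eapply (absent_not_Occ R G' M y); eauto using mc_env_finitary.
Qed.

(* [Wcount k x M c]: the contribution of the free occurrences of [x] to [W^k_0 M];
   an occurrence under [j] inductive boxes counts [k^j], one under a coinductive box [0]. *)
Inductive Wcount (k : nat) : nat -> term -> nat -> Prop :=
| wc_var : forall x y, Wcount k x (Var y) (if Nat.eqb y x then 1 else 0)
| wc_app : forall x A B a b, Wcount k x A a -> Wcount k x B b -> Wcount k x (App A B) (a + b)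
| wc_lam : forall x A a, Wcount k (S x) A a -> Wcount k x (Lam A) a
| wc_lamI : forall x A a, Wcount k (S x) A a -> Wcount k x (LamI A) a
| wc_lamC : forall x A a, Wcount k (S x) A a -> Wcount k x (LamC A) a
| wc_boxI : forall x A a, Wcount k x A a -> Wcount k x (BoxI A) (k * a)
| wc_boxC : forall x A, Wcount k x (BoxC A) 0.

Definition at_least_occs x M c :=
  exists l, NoDup l /\ length l = c /\ forall p, In p l -> Occ x M p.

Lemma at_least_occs_0 x M : at_least_occs x M 0.
Proof. exists []; repeat split; [constructor|intros p []]. Qed.

Lemma at_least_occs_map_cons d x A y T c :
  (forall q, Occ x A q -> Occ y T (d :: q)) -> at_least_occs x A c -> at_least_occs y T c.
Proof.
  intros E (l & ND & <- & Hl); exists (map (cons d) l); repeat split.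
  - apply NoDup_map_injective; [congruence|exact ND].
  - apply length_map.
  - intros p Hp; apply in_map_iff in Hp as [q [<- Hq]]; auto.
Qed.

Lemma at_least_occs_App x A B a b :
  at_least_occs x A a -> at_least_occs x B b -> at_least_occs x (App A B) (a + b).
Proof.
  intros (l1 & N1 & <- & H1) (l2 & N2 & <- & H2).
  exists (map (cons dAppL) l1 ++ map (cons dAppR) l2); repeat split.
  - apply NoDup_app; try (apply NoDup_map_injective; [congruence|assumption]).
    intros p Hp1 Hp2; apply in_map_iff in Hp1 as [? [<- _]]; apply in_map_iff in Hp2 as [? [E _]].
    discriminate.
  - now rewrite length_app, !length_map.
  - intro p; rewrite in_app_iff, !in_map_iff.
    intros [[q [<- Hq]]|[q [<- Hq]]]; constructor; auto.
Qed.

Lemma at_least_occs_le_nfo x M c d : at_least_occs x M c -> nfo x M d -> c <= d.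
Proof.
  intros (l & ND & <- & Hl) (l' & _ & Hl' & <-).
  apply NoDup_incl_length; [exact ND|]; intros p Hp; now apply Hl', Hl.
Qed.

Definition count_bound k (o : option kind) x M c : Prop :=
  match o with
  | None | Some KUp => c = 0
  | Some KLin => c <= 1
  | Some KDown => c <= k
  | Some KHash => at_least_occs x M c
  | Some KDag => True
  end.

Lemma at_least_occs_Var x : at_least_occs x (Var x) 1.
Proof. exists [[]]; repeat split; [repeat constructor; intros []|intros p [<-|[]]; constructor]. Qed.

Lemma Wcount_bound R G M k x c : derI R G M -> Wcount k x M c -> count_bound k (G x) x M c.
Proof.
  intro D; revert x c; induction D; intros y c C; inversion C; subst;
    repeat match goal with
           | IH : forall x c, Wcount k x ?T c -> _, W : Wcount k _ ?T _ |- _ => specialize (IH _ _ W)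
           end.
  1-3: destruct H as [H1 H2]; destruct (Nat.eqb_spec x y) as [->|Hne];
       [rewrite H1; simpl; auto using at_least_occs_Var
       |specialize (H2 y (fun E => Hne (eq_sym E)));
        destruct (G y) as [[]|]; simpl in *; auto using at_least_occs_0; contradiction].
  all: try (simpl in IHD; destruct (G y) as [[]|]; simpl in *; auto;
            revert IHD; apply (at_least_occs_map_cons dAbs); intros; constructor; assumption).
  - env_cases H G y; auto using at_least_occs_App.
  - env_cases H G y; try nia; subst; rewrite Nat.mul_0_r; apply at_least_occs_0.
  - destruct (G y) as [[]|]; simpl; auto using at_least_occs_0; lia.
Qed.

(* Free occurrences outside every coinductive box: only these influence [D_0]. *)
Inductive OccInd : nat -> term -> Prop :=
| oi_var : forall x, OccInd x (Var x)
| oi_appl : forall x A B, OccInd x A -> OccInd x (App A B)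
| oi_appr : forall x A B, OccInd x B -> OccInd x (App A B)
| oi_lam : forall x A, OccInd (S x) A -> OccInd x (Lam A)
| oi_lamI : forall x A, OccInd (S x) A -> OccInd x (LamI A)
| oi_lamC : forall x A, OccInd (S x) A -> OccInd x (LamC A)
| oi_boxI : forall x A, OccInd x A -> OccInd x (BoxI A).

Lemma OccInd_entry R G M x : derI R G M -> OccInd x M -> G x <> None /\ G x <> Some KUp.
Proof.
  intro D; revert x; induction D; intros y O; inversion O; subst.
  1-3: destruct H as [Hx _]; rewrite Hx; split; discriminate.
  all: try (apply (IHD (S y)); assumption).
  - destruct (IHD1 y H2); env_cases H G y; split; congruence.
  - destruct (IHD2 y H2); env_cases H G y; split; congruence.
  - destruct (IHD y H2); env_cases H G y; split; congruence.
Qed.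

Lemma Wt_defined R G M k m : deriv_closed R -> derI R G M -> exists w, Wt k m M w.
Proof.
  intro HR; revert G M; induction m as [|m IHm]; intros G M D; induction D.
  all: repeat match goal with IH : exists _, _ |- _ => destruct IH end.
  all: try (eexists; constructor; eassumption).
  destruct (IHm _ _ (HR _ _ H0)); eexists; constructor; eassumption.
Qed.

Lemma Dup_defined R G M m : deriv_closed R -> derI R G M -> exists d, Dup m M d.
Proof.
  intro HR; revert G M; induction m as [|m IHm]; intros G M D; induction D.
  all: repeat match goal with IH : exists _, _ |- _ => destruct IH end.
  all: try (eexists; constructor; eassumption).
  all: try (destruct (IHm _ _ (HR _ _ H0)); eexists; constructor; eassumption).
  all: destruct (finitary_OccList R _ _ 0 HR D I) as [l [O _]].
  all: eexists; apply d0_lamI; [eassumption|apply nfo_OccList; eauto].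
Qed.

(** * Substitution *)

Lemma up_Wt_1 k s x :
  (forall y, y <> x -> Wt k 0 (s y) 1) -> forall z, z <> S x -> Wt k 0 (up s z) 1.
Proof. intros Hs [|j] Hj; simpl; [constructor|]. apply Wt_ren, Hs; congruence. Qed.

(* Each weighted occurrence of [x] (weight [c] in total) is replaced by a term of
   weight [a]; the identity is [w' = w - c + c * a] without truncated subtraction. *)
Lemma Wt_subst k M w s x a : Wt k 0 M w ->
  (forall y, y <> x -> Wt k 0 (s y) 1) -> Wt k 0 (s x) a ->
  exists c w', Wcount k x M c /\ Wt k 0 (subst s M) w' /\ w' + c = w + c * a.
Proof.
  intro H; remember 0 as z eqn:Ez; revert s x a; induction H; intros s y aa Hs Hx;
    try discriminate; autorewrite with term_eqs.
  all: try (destruct (IHWt Ez (up s) (S y) aa (up_Wt_1 _ _ _ Hs) (Wt_ren _ _ _ _ Hx S))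
              as (c & w' & C & W & E);
            exists c, (w' + 1); repeat split; [now constructor|now constructor|lia]).
  - destruct (Nat.eqb_spec x y) as [->|Hne].
    + exists 1, aa; split; [|split; [assumption|lia]].
      pose proof (wc_var k y y) as C; now rewrite Nat.eqb_refl in C.
    + exists 0, 1; split; [|split; [apply Hs, Hne|lia]].
      pose proof (wc_var k y x) as C; now rewrite (proj2 (Nat.eqb_neq x y) Hne) in C.
  - destruct (IHWt Ez s y aa Hs Hx) as (c & w' & C & W & E).
    exists (k * c), (k * w'); repeat split; [now constructor|now constructor|nia].
  - exists 0, 0; repeat split; constructor.
  - destruct (IHWt1 Ez s y aa Hs Hx) as (c1 & w1 & C1 & W1 & E1).
    destruct (IHWt2 Ez s y aa Hs Hx) as (c2 & w2 & C2 & W2 & E2).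
    exists (c1 + c2), (w1 + w2); repeat split; [now constructor|now constructor|nia].
Qed.

Lemma Occ0_up_subst s B p : Occ 0 (subst (up s) B) p <-> Occ 0 B p.
Proof.
  split; intro O.
  - destruct (Occ_subst_inv _ _ _ O (up s) B eq_refl) as ([|j] & q & t & Oq & Ot & ->);
      simpl in Ot.
    + inversion Ot; subst; now rewrite app_nil_r.
    + destruct (Occ_ren_S_inv _ _ _ Ot) as [? [E _]]; discriminate.
  - rewrite <- (app_nil_r p); apply (Occ_subst _ _ _ O); constructor.
Qed.

Lemma up_Dup_le s D (P : nat -> Prop) : 1 <= D ->
  (forall y, P (S y) -> exists e, Dup 0 (s y) e /\ e <= D) ->
  forall y, P y -> exists e, Dup 0 (up s y) e /\ e <= D.
Proof.
  intros HD Hs [|j] Hj; simpl.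
  - exists 1; split; [constructor|exact HD].
  - destruct (Hs j Hj) as [e [De Le]]; exists e; split; [apply Dup_ren, De|exact Le].
Qed.

Lemma Dup_subst M d s D : Dup 0 M d -> d <= D ->
  (forall y, OccInd y M -> exists e, Dup 0 (s y) e /\ e <= D) ->
  exists d', Dup 0 (subst s M) d' /\ d' <= D.
Proof.
  intro H; remember 0 as z eqn:Ez; revert s D; induction H; intros s D Hd Hs;
    try discriminate; autorewrite with term_eqs.
  all: try (assert (1 <= D) by (pose proof (Dup_pos _ _ _ H); lia);
            destruct (IHDup Ez (up s) D ltac:(lia)) as [d' [Dd Ld]];
            [apply up_Dup_le; auto; intros; apply Hs; constructor; assumption|];
            exists d'; split; [constructor; exact Dd|exact Ld]).
  - apply Hs; constructor.
  - destruct (IHDup Ez s D Hd) as [d' [Dd Ld]]; [intros y O; apply Hs; now constructor|].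
    exists d'; split; [now constructor|exact Ld].
  - exists 1; split; [constructor|lia].
  - destruct (IHDup1 Ez s D) as [d1 [D1 L1]]; [lia|intros y O; apply Hs; now constructor|].
    destruct (IHDup2 Ez s D) as [d2 [D2 L2]]; [lia|intros y O; apply Hs; now apply oi_appr|].
    exists (Nat.max d1 d2); split; [now constructor|lia].
  - assert (1 <= D) by (pose proof (Dup_pos _ _ _ H); lia).
    destruct (IHDup Ez (up s) D ltac:(lia)) as [d' [Dd Ld]].
    { apply up_Dup_le; auto; intros; apply Hs; constructor; assumption. }
    exists (Nat.max c d'); split; [|lia].
    constructor; [exact Dd|]; eapply nfo_ext; [|eassumption].
    intro p; now rewrite Occ0_up_subst.
Qed.

Definition sub0 (N : term) : nat -> term := fun i => match i with 0 => N | S j => Var j end.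

Lemma Occ_subst0_inv x N M p : Occ x (subst0 N M) p ->
  Occ (S x) M p \/ exists q t, Occ 0 M q /\ Occ x N t /\ p = q ++ t.
Proof.
  intro O; destruct (Occ_subst_inv _ _ _ O (sub0 N) M eq_refl) as ([|j] & q & t & Oq & Ot & ->);
    simpl in Ot.
  - right; eauto.
  - inversion Ot; subst; left; now rewrite app_nil_r.
Qed.

Definition path_product (lb le : list (list dir)) := flat_map (fun q => map (app q) le) lb.

Lemma path_product_length lb le : length (path_product lb le) = length lb * length le.
Proof. unfold path_product; rewrite (flat_map_constant_length (c := length le)); auto using length_map. Qed.

Lemma in_path_product p lb le :
  In p (path_product lb le) <-> exists q t, In q lb /\ In t le /\ p = q ++ t.
Proof.
  unfold path_product; rewrite in_flat_map; split.
  - intros [q [Hq Hp]]; apply in_map_iff in Hp as [t [<- Ht]]; eauto.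
  - intros (q & t & Hq & Ht & ->); exists q; split; auto; apply in_map_iff; eauto.
Qed.

Lemma NoDup_path_product M lb le : NoDup lb -> NoDup le ->
  (forall q, In q lb -> Occ 0 M q) -> NoDup (path_product lb le).
Proof.
  intros Nb Ne Hb; induction Nb as [|q lb Hq Nb IH]; simpl; [constructor|].
  apply NoDup_app.
  - apply NoDup_map_injective; [intros a b E; eapply app_inv_head; eauto|exact Ne].
  - apply IH; intros q' Hq'; apply Hb; now right.
  - intros p Hp Hp'; apply in_map_iff in Hp as [t [<- Ht]].
    apply in_path_product in Hp' as (q' & t' & Hq' & Ht' & E).
    assert (q = q') as <- by (eapply (Occ_prefix_free 0 M); eauto using in_eq, in_cons).
    contradiction.
Qed.

Lemma OccList_subst0 x N M la lb le : OccList (S x) M la -> OccList 0 M lb ->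
  OccList x N le -> OccList x (subst0 N M) (la ++ path_product lb le).
Proof.
  intros [Na Ha] [Nb Hb] [Ne He]; split.
  - apply NoDup_app; auto.
    + apply (NoDup_path_product M); auto; intros q Hq; now apply Hb.
    + intros p Hp Hp'; apply in_path_product in Hp' as (q & t & Hq & Ht & ->).
      apply Ha in Hp; apply Hb in Hq.
      assert (E : q ++ t = q) by (apply (Occ_prefix_free _ _ _ Hp 0 q [] t Hq); now rewrite app_nil_r).
      rewrite E in Hp; pose proof (Occ_var_unique _ _ _ Hp _ Hq); discriminate.
  - intro p; rewrite in_app_iff, in_path_product; split.
    + intros [Hp|(q & t & Hq & Ht & ->)].
      * rewrite <- (app_nil_r p); apply Ha in Hp; apply (Occ_subst _ _ _ Hp (sub0 N)); constructor.
      * apply Hb in Hq; apply He in Ht; exact (Occ_subst _ _ _ Hq (sub0 N) _ _ Ht).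
    + intro O; destruct (Occ_subst0_inv _ _ _ _ O) as [O'|(q & t & Oq & Ot & ->)].
      * left; now apply Ha.
      * right; exists q, t; repeat split; [apply Hb|apply He]; auto.
Qed.

Lemma OccList_subst0_absent x N M la : OccList (S x) M la ->
  (forall t, ~ Occ x N t) -> OccList x (subst0 N M) la.
Proof.
  intros [Na Ha] Hn; split; auto; intro p; split.
  - intro Hp; rewrite <- (app_nil_r p); apply Ha in Hp; apply (Occ_subst _ _ _ Hp (sub0 N)); constructor.
  - intro O; destruct (Occ_subst0_inv _ _ _ _ O) as [O'|(q & t & _ & Ot & _)];
      [now apply Ha|exfalso; eapply Hn; eauto].
Qed.

(** * Steps below the depth of the redex *)

Lemma step0_Wt_below n M M' k m w : step0 n M M' -> m < n -> Wt k m M w <-> Wt k m M' w.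
Proof.
  intro St; revert m w; induction St; intros m w Hm; try lia.
  all: split; intro HW; inversion HW; subst; constructor; auto.
  all: apply IHSt; auto; lia.
Qed.

Lemma step0_Occ_back n M M' x p : step0 n M M' -> Occ x M' p -> exists q, Occ x M q.
Proof.
  intro St; revert x p; induction St; intros x p O.
  1-3: destruct (Occ_subst0_inv _ _ _ _ O) as [O'|(q & t & _ & O' & _)]; eexists;
       [apply occ_appl; constructor; eassumption|apply occ_appr; try constructor; eassumption].
  all: inversion O; subst;
       try (destruct (IHSt _ _ ltac:(eassumption)) as [q ?]); eexists; constructor; eassumption.
Qed.

Lemma step0_Occ_deep R G n M M' x : step0 n M M' -> 0 < n -> deriv_closed R ->
  derI R G M -> finitary (G x) -> forall p, Occ x M p <-> Occ x M' p.
Proof.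
  intros St Hn HR; revert G x; induction St; intros G y D Hy; try lia; inversion D; subst.
  1-2: match goal with Hs : app_split _ _ _ |- _ =>
         destruct (app_split_finitary _ _ _ y Hs Hy) as [K1 K2] end.
  all: try (intro p; split; intro O; inversion O; subst; constructor; auto;
            eapply IHSt; eauto using mi_env_finitary; fail).
  assert (K : G' y = None) by (eapply mc_env_finitary; eauto).
  intro p; split; intro O; exfalso; inversion O; subst.
  - eapply (absent_not_Occ R G' M y); eauto.
  - match goal with O' : Occ _ M' _ |- _ => destruct (step0_Occ_back _ _ _ _ _ St O') as [q Hq] end.
    eapply (absent_not_Occ R G' M y); eauto.
Qed.

Lemma step0_Dup_below R G n M M' m d : step0 n M M' -> deriv_closed R -> derI R G M ->
  m < n -> Dup m M d <-> Dup m M' d.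
Proof.
  intros St HR; revert G m d; induction St; intros G m d D Hm; try lia; inversion D; subst.
  all: split; intro HD; inversion HD; subst; constructor; eauto.
  all: try (eapply IHSt; eauto; lia).
  all: eapply nfo_ext; [|eassumption]; intro p.
  all: first [eapply (step0_Occ_deep R); eauto; exact I
             |symmetry; eapply (step0_Occ_deep R); eauto; exact I].
Qed.

(** * Steps at the depth of the redex *)

Section DerivationInversion.
Variable R : env -> term -> Prop.

Lemma derI_App_inv G A B : derI R G (App A B) ->
  exists G1 G2, app_split G G1 G2 /\ derI R G1 A /\ derI R G2 B.
Proof. intro D; inversion D; subst; eauto. Qed.
Lemma derI_Lam_inv G A : derI R G (Lam A) -> derI R (ext KLin G) A.
Proof. intro D; inversion D; subst; eauto. Qed.
Lemma derI_LamI_inv G A : derI R G (LamI A) -> derI R (ext KHash G) A \/ derI R (ext KDown G) A.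
Proof. intro D; inversion D; subst; eauto. Qed.
Lemma derI_LamC_inv G A : derI R G (LamC A) -> derI R (ext KUp G) A.
Proof. intro D; inversion D; subst; eauto. Qed.
Lemma derI_BoxI_inv G A : derI R G (BoxI A) -> exists G', mi_env G G' /\ derI R G' A.
Proof. intro D; inversion D; subst; eauto. Qed.
Lemma derI_BoxC_inv G A : derI R G (BoxC A) -> exists G', mc_env G G' /\ R G' A.
Proof. intro D; inversion D; subst; eauto. Qed.

End DerivationInversion.

Lemma mi_env_finitary_cases G G' x : mi_env G G' -> finitary (G x) ->
  G' x = None \/ (G' x = Some KLin /\ G x = Some KDown).
Proof. intro H; env_cases H G x. Qed.

(* At depth 0 the number of occurrences of a variable can only grow when a linear
   [down x] is copied by a [#]-abstraction, and then it is bounded by [D_0]. *)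
Definition occ_count_bound (o : option kind) M (c c' : nat) : Prop :=
  c' <= c \/ (linear_entry o /\ forall d, Dup 0 M d -> c' <= d).

Lemma occ_count_bound_weaken o o' M M' c c' :
  (linear_entry o' -> linear_entry o) ->
  (forall d, Dup 0 M' d -> exists d0, Dup 0 M d0 /\ d0 <= d) ->
  occ_count_bound o' M c c' -> occ_count_bound o M' c c'.
Proof.
  intros Lo HD [C|[L C]]; [now left|right; split; auto].
  intros d Hd; destruct (HD d Hd) as [d0 [Hd0 Le]]; specialize (C _ Hd0); lia.
Qed.

Lemma occ_count_bound_App_l G G1 G2 x A B c1 c1' c2 : app_split G G1 G2 ->
  occ_bound (G2 x) c2 -> occ_count_bound (G1 x) A c1 c1' ->
  occ_count_bound (G x) (App A B) (c1 + c2) (c1' + c2).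
Proof.
  intros Hs B2 [C|[L C]]; [left; lia|right].
  destruct (app_split_linear_l _ _ _ x Hs L) as [LG E2]; rewrite E2 in B2; simpl in B2; subst.
  split; [exact LG|]; intros d HD; inversion HD as [| | |? ? a b HA HB| | | | | | | | | |]; subst.
  specialize (C _ HA); lia.
Qed.

Lemma occ_count_bound_App_r G G1 G2 x A B c1 c2 c2' : app_split G G1 G2 ->
  occ_bound (G1 x) c1 -> occ_count_bound (G2 x) B c2 c2' ->
  occ_count_bound (G x) (App A B) (c1 + c2) (c1 + c2').
Proof.
  intros Hs B1 [C|[L C]]; [left; lia|right].
  destruct (app_split_linear_r _ _ _ x Hs L) as [LG E1]; rewrite E1 in B1; simpl in B1; subst.
  split; [exact LG|]; intros d HD; inversion HD as [| | |? ? a b HA HB| | | | | | | | | |]; subst.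
  specialize (C _ HB); lia.
Qed.

Section OccurrenceCount.
Variable R : env -> term -> Prop.
Hypothesis HR : deriv_closed R.

Definition occ_count_step M M' := forall G x l, derI R G M -> finitary (G x) -> OccList x M l ->
  exists l', OccList x M' l' /\ occ_count_bound (G x) M (length l) (length l').

Lemma occ_count_step_beta M N : occ_count_step (App (Lam M) N) (subst0 N M).
Proof.
  intros G x l D Hx Hl.
  destruct (derI_App_inv _ _ _ _ D) as (G1 & G2 & Hs & D1 & D2); apply derI_Lam_inv in D1.
  destruct (app_split_finitary _ _ _ x Hs Hx) as [K1 K2].
  destruct (finitary_OccList R _ _ (S x) HR D1 K1) as [la [Oa _]].
  destruct (finitary_OccList R _ _ 0 HR D1 I) as [lb [Ob Lb]].
  destruct (finitary_OccList R _ _ x HR D2 K2) as [le [Oe _]].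
  pose proof (OccList_length _ _ _ _ Hl (OccList_App _ _ _ _ _ (OccList_Lam _ _ _ Oa) Oe)) as HL.
  rewrite length_app, !length_map in HL; simpl in Lb.
  exists (la ++ path_product lb le); split; [now apply OccList_subst0|left].
  rewrite length_app, path_product_length; nia.
Qed.

Lemma occ_count_step_betaI M N : occ_count_step (App (LamI M) (BoxI N)) (subst0 N M).
Proof.
  intros G x l D Hx Hl.
  destruct (derI_App_inv _ _ _ _ D) as (G1 & G2 & Hs & D1 & D2).
  destruct (derI_BoxI_inv _ _ _ D2) as (G' & Hmi & DN).
  destruct (app_split_finitary _ _ _ x Hs Hx) as [K1 K2].
  destruct (finitary_OccList R _ _ x HR DN (mi_env_finitary _ _ _ Hmi K2)) as [le [Oe Le]].
  assert (HL : forall la, OccList (S x) M la -> length l = length la + length le).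
  { intros la Oa.
    rewrite (OccList_length _ _ _ _ Hl
               (OccList_App _ _ _ _ _ (OccList_LamI _ _ _ Oa) (OccList_BoxI _ _ _ Oe))).
    now rewrite length_app, !length_map. }
  destruct (derI_LamI_inv _ _ _ D1) as [DM|DM];
    destruct (finitary_OccList R _ _ (S x) HR DM K1) as [la [Oa Ba]];
    destruct (finitary_OccList R _ _ 0 HR DM I) as [lb [Ob Lb]];
    specialize (HL _ Oa); simpl in Ba, Lb;
    exists (la ++ path_product lb le); (split; [now apply OccList_subst0|]);
    rewrite length_app, path_product_length.
  - destruct (mi_env_finitary_cases _ _ x Hmi K2) as [EN|[EN E2]]; rewrite EN in Le; simpl in Le.
    + left; rewrite Le; lia.
    + destruct (app_split_linear_r G G1 G2 x Hs) as [LG E1]; [now rewrite E2|].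
      rewrite E1 in Ba; simpl in Ba; rewrite Ba.
      right; split; [exact LG|]; intros d HD.
      inversion HD; subst.
      match goal with H : Dup 0 (LamI M) _ |- _ => inversion H; subst end.
      match goal with H : nfo 0 M _ |- _ => apply nfo_OccList in H as [lb' [Ob' <-]] end.
      rewrite (OccList_length _ _ _ _ Ob Ob'); nia.
  - left; nia.
Qed.

Lemma occ_count_step_betaC M N : occ_count_step (App (LamC M) (BoxC N)) (subst0 N M).
Proof.
  intros G x l D Hx Hl.
  destruct (derI_App_inv _ _ _ _ D) as (G1 & G2 & Hs & D1 & D2); apply derI_LamC_inv in D1.
  destruct (derI_BoxC_inv _ _ _ D2) as (G' & Hmc & RN).
  destruct (app_split_finitary _ _ _ x Hs Hx) as [K1 K2].
  assert (NO : forall t, ~ Occ x N t)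
    by (intro t; apply (absent_not_Occ R G'); eauto using mc_env_finitary).
  destruct (finitary_OccList R _ _ (S x) HR D1 K1) as [la [Oa _]].
  assert (Oe : OccList x (BoxC N) [])
    by (apply OccList_nil; intros p O; inversion O; eapply NO; eauto).
  pose proof (OccList_length _ _ _ _ Hl (OccList_App _ _ _ _ _ (OccList_LamC _ _ _ Oa) Oe)) as HL.
  rewrite length_app, !length_map in HL; simpl in HL.
  exists la; split; [now apply OccList_subst0_absent|left; lia].
Qed.

Lemma occ_count_step_App_l M M' N :
  occ_count_step M M' -> occ_count_step (App M N) (App M' N).
Proof.
  intros IH G y l D Hy Hl.
  destruct (derI_App_inv _ _ _ _ D) as (G1 & G2 & Hs & D1 & D2).
  destruct (app_split_finitary _ _ _ y Hs Hy) as [K1 K2].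
  destruct (finitary_OccList R _ _ y HR D1 K1) as [l1 [O1 _]].
  destruct (finitary_OccList R _ _ y HR D2 K2) as [l2 [O2 B2]].
  rewrite (OccList_length _ _ _ _ Hl (OccList_App _ _ _ _ _ O1 O2)).
  destruct (IH _ _ _ D1 K1 O1) as [l1' [O1' C]].
  exists (map (cons dAppL) l1' ++ map (cons dAppR) l2); split; [now apply OccList_App|].
  rewrite !length_app, !length_map; eapply occ_count_bound_App_l; eauto.
Qed.

Lemma occ_count_step_App_r M N N' :
  occ_count_step N N' -> occ_count_step (App M N) (App M N').
Proof.
  intros IH G y l D Hy Hl.
  destruct (derI_App_inv _ _ _ _ D) as (G1 & G2 & Hs & D1 & D2).
  destruct (app_split_finitary _ _ _ y Hs Hy) as [K1 K2].
  destruct (finitary_OccList R _ _ y HR D1 K1) as [l1 [O1 B1]].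
  destruct (finitary_OccList R _ _ y HR D2 K2) as [l2 [O2 _]].
  rewrite (OccList_length _ _ _ _ Hl (OccList_App _ _ _ _ _ O1 O2)).
  destruct (IH _ _ _ D2 K2 O2) as [l2' [O2' C]].
  exists (map (cons dAppL) l1 ++ map (cons dAppR) l2'); split; [now apply OccList_App|].
  rewrite !length_app, !length_map; eapply occ_count_bound_App_r; eauto.
Qed.

Lemma occ_count_step_Lam M M' : occ_count_step M M' -> occ_count_step (Lam M) (Lam M').
Proof.
  intros IH G y l D Hy Hl; apply derI_Lam_inv in D.
  destruct (finitary_OccList R _ _ (S y) HR D Hy) as [l0 [O0 _]].
  rewrite (OccList_length _ _ _ _ Hl (OccList_Lam _ _ _ O0)), length_map.
  destruct (IH _ (S y) _ D Hy O0) as [l0' [O0' C]].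
  exists (map (cons dAbs) l0'); split; [now apply OccList_Lam|rewrite length_map].
  revert C; apply occ_count_bound_weaken; [auto|intros d HD; inversion HD; eauto].
Qed.

Lemma occ_count_step_LamI M M' : occ_count_step M M' -> occ_count_step (LamI M) (LamI M').
Proof.
  intros IH G y l D Hy Hl.
  assert (DupI : forall d, Dup 0 (LamI M) d -> exists d0, Dup 0 M d0 /\ d0 <= d)
    by (intros d HD; inversion HD; subst; eexists; split; [eassumption|lia]).
  destruct (derI_LamI_inv _ _ _ D) as [D'|D'];
    destruct (finitary_OccList R _ _ (S y) HR D' Hy) as [l0 [O0 _]];
    rewrite (OccList_length _ _ _ _ Hl (OccList_LamI _ _ _ O0)), length_map;
    destruct (IH _ (S y) _ D' Hy O0) as [l0' [O0' C]];
    exists (map (cons dAbs) l0'); rewrite length_map;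
    (split; [now apply OccList_LamI|]);
    revert C; apply occ_count_bound_weaken; auto.
Qed.

Lemma occ_count_step_LamC M M' : occ_count_step M M' -> occ_count_step (LamC M) (LamC M').
Proof.
  intros IH G y l D Hy Hl; apply derI_LamC_inv in D.
  destruct (finitary_OccList R _ _ (S y) HR D Hy) as [l0 [O0 _]].
  rewrite (OccList_length _ _ _ _ Hl (OccList_LamC _ _ _ O0)), length_map.
  destruct (IH _ (S y) _ D Hy O0) as [l0' [O0' C]].
  exists (map (cons dAbs) l0'); split; [now apply OccList_LamC|rewrite length_map].
  revert C; apply occ_count_bound_weaken; [auto|intros d HD; inversion HD; eauto].
Qed.

Lemma occ_count_step_BoxI M M' : occ_count_step M M' -> occ_count_step (BoxI M) (BoxI M').
Proof.
  intros IH G y l D Hy Hl.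
  destruct (derI_BoxI_inv _ _ _ D) as [G' [Hmi D']].
  pose proof (mi_env_finitary _ _ _ Hmi Hy) as K.
  destruct (finitary_OccList R _ _ y HR D' K) as [l0 [O0 _]].
  rewrite (OccList_length _ _ _ _ Hl (OccList_BoxI _ _ _ O0)), length_map.
  destruct (IH _ _ _ D' K O0) as [l0' [O0' C]].
  exists (map (cons dBoxI) l0'); split; [now apply OccList_BoxI|rewrite length_map].
  revert C; apply occ_count_bound_weaken; [eauto using mi_env_linear|].
  intros d HD; inversion HD; eauto.
Qed.

Lemma step0_occ_count M M' : step0 0 M M' -> occ_count_step M M'.
Proof.
  remember 0 as n eqn:En; induction 1; try discriminate; subst.
  - apply occ_count_step_beta.
  - apply occ_count_step_betaI.
  - apply occ_count_step_betaC.
  - now apply occ_count_step_App_l, IHstep0.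
  - now apply occ_count_step_App_r, IHstep0.
  - now apply occ_count_step_Lam, IHstep0.
  - now apply occ_count_step_LamI, IHstep0.
  - now apply occ_count_step_LamC, IHstep0.
  - now apply occ_count_step_BoxI, IHstep0.
Qed.

End OccurrenceCount.

Lemma Dup_beta M N d : Dup 0 (App (Lam M) N) d ->
  exists d', Dup 0 (subst0 N M) d' /\ d' <= d.
Proof.
  intro HD; pose proof (Dup_pos _ _ _ HD).
  inversion HD as [| | |? ? a b HA HB| | | | | | | | | |]; subst; inversion HA; subst.
  apply (Dup_subst M a (sub0 N)); [assumption|lia|].
  intros [|j] _; simpl; [exists b|exists 1]; split; auto using Dup; lia.
Qed.

Lemma Dup_betaI M N d : Dup 0 (App (LamI M) (BoxI N)) d ->
  exists d', Dup 0 (subst0 N M) d' /\ d' <= d.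
Proof.
  intro HD; pose proof (Dup_pos _ _ _ HD).
  inversion HD as [| | |? ? a b HA HB| | | | | | | | | |]; subst; inversion HA; inversion HB; subst.
  eapply (Dup_subst M _ (sub0 N)); [eassumption|lia|].
  intros [|j] _; simpl; eexists; split; eauto using Dup; lia.
Qed.

(* The argument of a coinductive redex is not seen by [D_0]: the bound variable has
   an [up] entry, so it only occurs inside coinductive boxes. *)
Lemma Dup_betaC R G M N d : derI R G (App (LamC M) (BoxC N)) ->
  Dup 0 (App (LamC M) (BoxC N)) d -> exists d', Dup 0 (subst0 N M) d' /\ d' <= d.
Proof.
  intros D HD; pose proof (Dup_pos _ _ _ HD).
  destruct (derI_App_inv _ _ _ _ D) as (G1 & G2 & _ & D1 & _); apply derI_LamC_inv in D1.
  inversion HD as [| | |? ? a b HA HB| | | | | | | | | |]; subst; inversion HA; subst.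
  apply (Dup_subst M a (sub0 N)); [assumption|lia|].
  intros [|j] O; simpl.
  - exfalso; now apply (OccInd_entry _ _ _ _ D1 O).
  - exists 1; split; [constructor|lia].
Qed.

Lemma Dup_step R G n M M' d : step0 n M M' -> deriv_closed R -> derI R G M ->
  Dup n M d -> exists d', Dup n M' d' /\ d' <= d.
Proof.
  intros St HR; revert G d; induction St; intros G d D HD.
  - now apply Dup_beta.
  - now apply Dup_betaI.
  - now apply (Dup_betaC R G).
  - destruct (derI_App_inv _ _ _ _ D) as (G1 & G2 & _ & D1 & _).
    inversion HD; subst; (edestruct IHSt as [d' [D' Ld]]; [exact D1|eassumption|]);
      (eexists; split; [econstructor; eassumption|lia]).
  - destruct (derI_App_inv _ _ _ _ D) as (G1 & G2 & _ & _ & D2).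
    inversion HD; subst; (edestruct IHSt as [d' [D' Ld]]; [exact D2|eassumption|]);
      (eexists; split; [econstructor; eassumption|lia]).
  - apply derI_Lam_inv in D.
    inversion HD; subst; (edestruct IHSt as [d' [D' Ld]]; [exact D|eassumption|]);
      (eexists; split; [econstructor; eassumption|lia]).
  - assert (exists G', derI R G' M /\ finitary (G' 0)) as (G' & D' & K)
      by (destruct (derI_LamI_inv _ _ _ D); eexists; split; eauto; exact I).
    inversion HD; subst; (edestruct IHSt as [d' [Dd Ld]]; [exact D'|eassumption|]).
    + match goal with H : nfo 0 M _ |- _ => apply nfo_OccList in H as [l [Ol <-]] end.
      destruct (step0_occ_count R HR M M' St _ 0 l D' K Ol) as [l' [Ol' C]].
      exists (Nat.max (length l') d'); split; [constructor; auto; apply nfo_OccList; eauto|].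
      destruct C as [C|[_ C]]; [|specialize (C _ ltac:(eassumption))]; lia.
    + exists d'; split; [constructor|]; assumption.
  - apply derI_LamC_inv in D.
    inversion HD; subst; (edestruct IHSt as [d' [D' Ld]]; [exact D|eassumption|]);
      (eexists; split; [econstructor; eassumption|lia]).
  - destruct (derI_BoxI_inv _ _ _ D) as [G' [_ D']].
    inversion HD; subst; (edestruct IHSt as [d' [Dd Ld]]; [exact D'|eassumption|]);
      (eexists; split; [econstructor; eassumption|lia]).
  - destruct (derI_BoxC_inv _ _ _ D) as [G' [_ D']].
    inversion HD; subst; (edestruct IHSt as [d' [Dd Ld]]; [exact (HR _ _ D')|eassumption|]);
      (eexists; split; [econstructor; eassumption|lia]).
Qed.

Lemma sub0_Wt_1 k N y : y <> 0 -> Wt k 0 (sub0 N y) 1.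
Proof. destruct y as [|j]; intro H; [congruence|constructor]. Qed.

Lemma Wt_beta R G k M N w : derI R G (App (Lam M) N) ->
  Wt k 0 (App (Lam M) N) w -> exists w', Wt k 0 (subst0 N M) w' /\ w' < w.
Proof.
  intros D HW.
  destruct (derI_App_inv _ _ _ _ D) as (G1 & G2 & _ & D1 & _); apply derI_Lam_inv in D1.
  inversion HW as [| | |? ? wl a HL HN| | | | | | | | | |]; subst; inversion HL; subst.
  match goal with H : Wt k 0 M _ |- _ =>
    destruct (Wt_subst _ _ _ (sub0 N) 0 a H (sub0_Wt_1 k N) HN) as (c & w' & C & W & E) end.
  pose proof (Wcount_bound _ _ _ _ _ _ D1 C) as Bc; simpl in Bc.
  exists w'; split; [exact W|nia].
Qed.

(* A [#]-bound variable is copied at most [nfo <= D_0 <= k] times, each copy of weight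
   [a], while the redex loses [k * a + 1]. *)
Lemma Wt_betaI R G k d M N w : derI R G (App (LamI M) (BoxI N)) ->
  Dup 0 (App (LamI M) (BoxI N)) d -> d <= k ->
  Wt k 0 (App (LamI M) (BoxI N)) w -> exists w', Wt k 0 (subst0 N M) w' /\ w' < w.
Proof.
  intros D HD Hdk HW.
  destruct (derI_App_inv _ _ _ _ D) as (G1 & G2 & _ & D1 & _).
  inversion HW as [| | |? ? wl wr HL HR'| | | | | | | | | |]; subst.
  inversion HL; inversion HR'; subst.
  match goal with H1 : Wt k 0 M _, H2 : Wt k 0 N ?a |- _ =>
    destruct (Wt_subst _ _ _ (sub0 N) 0 a H1 (sub0_Wt_1 k N) H2) as (c & w' & C & W & E) end.
  assert (Hc : c <= k).
  { inversion HD; subst; match goal with H : Dup 0 (LamI M) _ |- _ => inversion H; subst end.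
    destruct (derI_LamI_inv _ _ _ D1) as [DM|DM];
      pose proof (Wcount_bound _ _ _ _ _ _ DM C) as Bc; simpl in Bc; [|lia].
    match goal with H : nfo 0 M _ |- _ => pose proof (at_least_occs_le_nfo _ _ _ _ Bc H) end.
    lia. }
  exists w'; split; [exact W|nia].
Qed.

Lemma Wt_betaC R G k M N w : deriv_closed R -> derI R G (App (LamC M) (BoxC N)) ->
  Wt k 0 (App (LamC M) (BoxC N)) w -> exists w', Wt k 0 (subst0 N M) w' /\ w' < w.
Proof.
  intros HR D HW.
  destruct (derI_App_inv _ _ _ _ D) as (G1 & G2 & _ & D1 & D2); apply derI_LamC_inv in D1.
  destruct (derI_BoxC_inv _ _ _ D2) as (G' & _ & RN).
  destruct (Wt_defined R _ _ k 0 HR (HR _ _ RN)) as [a Ha].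
  inversion HW as [| | |? ? wl wr HL HR'| | | | | | | | | |]; subst; inversion HL; inversion HR'; subst.
  match goal with H : Wt k 0 M _ |- _ =>
    destruct (Wt_subst _ _ _ (sub0 N) 0 a H (sub0_Wt_1 k N) Ha) as (c & w' & C & W & E) end.
  pose proof (Wcount_bound _ _ _ _ _ _ D1 C) as Bc; simpl in Bc.
  exists w'; split; [exact W|nia].
Qed.

Lemma Wt_step R G n M M' k d w : step0 n M M' -> deriv_closed R -> derI R G M ->
  1 <= k -> Dup n M d -> d <= k -> Wt k n M w -> exists w', Wt k n M' w' /\ w' < w.
Proof.
  intros St HR D Hk; revert G d w D; induction St; intros G d w D HD Hdk HW.
  1: eapply Wt_beta; eauto.
  1: eapply Wt_betaI; eauto.
  1: eapply Wt_betaC; eauto.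
  all: match type of St with step0 _ ?T _ =>
         assert (exists G', derI R G' T) as [G' D']
           by (inversion D; subst; eauto; eexists; apply HR; eassumption) end.
  all: inversion HD; subst; inversion HW; subst;
    match goal with HDm : Dup _ ?T ?dm, HWm : Wt _ _ ?T ?wm, St : step0 _ ?T _ |- _ =>
      destruct (IHSt _ dm wm D' HDm ltac:(lia) HWm) as [w' [W' Lw]] end;
    (eexists; split; [econstructor; eassumption|nia]).
Qed.

Lemma calW_bisim m A B v : calW m A v -> bisim A B -> calW m B v.
Proof. intros [d [HD HW]] E; exists d; split; [eapply Dup_bisim|eapply Wt_bisim]; eauto. Qed.

Lemma calW_unique m M v v' : calW m M v -> calW m M v' -> v = v'.
Proof.
  intros [d [HD HW]] [d' [HD' HW']].
  rewrite (Dup_unique _ _ _ HD _ HD') in HW; exact (Wt_unique _ _ _ _ HW _ HW').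
Qed.

Lemma calW_defined R G M m : deriv_closed R -> derI R G M -> exists v, calW m M v.
Proof.
  intros HR D; destruct (Dup_defined R G M m HR D) as [d HD].
  destruct (Wt_defined R G M d m HR D) as [v HW]; exists v, d; auto.
Qed.

Lemma calW_step_below R G n M M' m v : step0 n M M' -> deriv_closed R -> derI R G M ->
  m < n -> calW m M v <-> calW m M' v.
Proof.
  intros St HR D Hm; split; intros [d [HD HW]]; exists d; split.
  - now apply (step0_Dup_below R G n M M' m d St HR D Hm).
  - now apply (step0_Wt_below n M M' d m v St Hm).
  - now apply (step0_Dup_below R G n M M' m d St HR D Hm).
  - now apply (step0_Wt_below n M M' d m v St Hm).
Qed.

Lemma calW_step_defined R G n M M' : step0 n M M' -> deriv_closed R -> derI R G M ->
  exists v, calW n M' v.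
Proof.
  intros St HR D.
  destruct (Dup_defined R G M n HR D) as [d HD].
  destruct (Wt_defined R G M d n HR D) as [w HW].
  destruct (Dup_step R G n M M' d St HR D HD) as [d' [HD' _]].
  destruct (Wt_step R G n M M' d d w St HR D (Dup_pos _ _ _ HD) HD (le_n _) HW) as [w' [HW' _]].
  destruct (Wt_change_k _ _ _ _ HW' d') as [v HV]; exists v, d'; auto.
Qed.

(* [W^k_n] only grows with [k], and [D_n] does not grow along the step. *)
Lemma calW_step_decrease R G n M M' v v' : step0 n M M' -> deriv_closed R -> derI R G M ->
  calW n M v -> calW n M' v' -> v' < v.
Proof.
  intros St HR D [d [HD HW]] [d' [HD' HW']].
  destruct (Dup_step R G n M M' d St HR D HD) as [d2 [HD2 Ld]].
  rewrite (Dup_unique _ _ _ HD' _ HD2) in HW'.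
  destruct (Wt_step R G n M M' d d v St HR D (Dup_pos _ _ _ HD) HD (le_n _) HW) as [w1 [HW1 L1]].
  destruct (Wt_mono _ _ _ _ HW' d Ld) as [w2 [HW2 L2]].
  rewrite (Wt_unique _ _ _ _ HW1 _ HW2) in L1; lia.
Qed.

Theorem mainTheorem13 (M N : term) (n : nat) :
  is_term M -> step n M N ->
  (forall m, m <= n -> (exists v, calW m M v) /\ (exists v, calW m N v)) /\
  (forall v v', calW n M v -> calW n N v' -> v > v') /\
  (forall m, m < n -> forall v v', calW m M v -> calW m N v' -> v = v').
Proof.
  intros [G [_ [R [RGM HR]]]] [N' [St Bis]].
  pose proof (HR _ _ RGM) as D.
  assert (ToN : forall m v, calW m N' v -> calW m N v) by eauto using calW_bisim.
  assert (OfN : forall m v, calW m N v -> calW m N' v) by eauto using calW_bisim, bisim_sym.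
  split; [|split].
  - intros m Hm; split; [exact (calW_defined R G M m HR D)|].
    destruct (Nat.lt_ge_cases m n) as [Hlt|Hge].
    + destruct (calW_defined R G M m HR D) as [v Hv].
      exists v; apply ToN; now apply (calW_step_below R G n M).
    + replace m with n by lia.
      destruct (calW_step_defined R G n M N' St HR D) as [v Hv]; eauto.
  - intros v v' Hv Hv'; exact (calW_step_decrease R G n M N' v v' St HR D Hv (OfN _ _ Hv')).
  - intros m Hm v v' Hv Hv'.
    apply (calW_unique m N'); [now apply (calW_step_below R G n M)|auto].
Qed.
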